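(* Let $\mathcal{L}$ be a complex filiform Lie algebra of dimension $n\ge3$ with a basis $\{e_1,\dots,e_n\}$ such that $[e_1,e_i]=e_{i+1}$ for all $2\le i\le n-1$ and $\{e_{k+2},\dots,e_n\}$ is a basis of $\mathcal{L}^k$ for $1\le k\le n-2$. Define the linear map $\Delta:\mathcal{L}\to\mathcal{L}$ by $\Delta(x)=x+x_3e_n$ for $x=\sum_{k=1}^n x_ke_k$. Then $\Delta$ is a local automorphism of $\mathcal{L}$ which is not an automorphism.
   Context: For a Lie algebra $\mathcal{L}$, $\mathcal{L}^0=\mathcal{L}$, $\mathcal{L}^k=[\mathcal{L}^{k-1},\mathcal{L}]$; an $n$-dimensional nilpotent Lie algebra is filiform if $\dim\mathcal{L}^k=n-k-1$ for $1\le k\le n-1$. (Other brackets among basis elements besides $[e_1,e_i]=e_{i+1}$ may be nonzero.) An automorphism is an invertible linear map $\Phi$ with $\Phi([x,y])=[\Phi(x),\Phi(y)]$ for all $x,y$; a linear map $\Delta$ is a local automorphism if for every $x\in\mathcal{L}$ there is an automorphism $\Phi_x$ with $\Phi_x(x)=\Delta(x)$. *)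

From HB Require Import structures.
From mathcomp Require Import all_boot all_order all_algebra.
Set Implicit Arguments. Unset Strict Implicit. Unset Printing Implicit Defensive.
Import Order.TTheory GRing.Theory Num.Theory.
Local Open Scope ring_scope.

(* A Lie algebra of dimension n over F is modelled on F^n = 'rV[F]_n, i.e. its
   elements are written in coordinates w.r.t. a fixed basis e_1,...,e_n,
   with a bracket br. *)

Section Lie.
Variable (F : fieldType) (n : nat).
Implicit Types (br : 'rV[F]_n -> 'rV[F]_n -> 'rV[F]_n) (f : 'rV[F]_n -> 'rV[F]_n).

(* e_i, 1-based: e_i has a 1 in coordinate i (positions 1..n) *)
Definition ev (i : nat) : 'rV[F]_n := \row_(j < n) ((j.+1 == i)%:R).

Definition coordk (x : 'rV[F]_n) (k : nat) : F := \sum_(j < n | j.+1 == k) x 0 j.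

Definition is_linear_map f :=
  forall (a : F) (x y : 'rV[F]_n), f (a *: x + y) = a *: f x + f y.

Definition is_lie_bracket br :=
  [/\ forall (a : F) x y z, br (a *: x + y) z = a *: br x z + br y z,
      forall (a : F) x y z, br z (a *: x + y) = a *: br z x + br z y,
      forall x, br x x = 0
    & forall x y z, br x (br y z) + br y (br z x) + br z (br x y) = 0].

(* lower central series L^0 = L, L^(k+1) = [L^k, L]; as a subspace (row space
   of a square matrix), spanned by the brackets of spanning vectors of L^k
   with the basis vectors of L (by bilinearity this is the span of [L^k, L]) *)
Fixpoint lcs br (k : nat) : 'M[F]_n :=
  match k with
  | 0 => 1%:M
  | k.+1 => (\sum_(i < n) \sum_(j < n) <<br (row i (lcs br k)) (ev j.+1)>>)%MS
  end.

Definition nilpotent_lie br := exists m, lcs br m = 0.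

Definition filiform br :=
  nilpotent_lie br /\
  forall k, (1 <= k <= n.-1)%N -> \rank (lcs br k) = (n - k - 1)%N.

Definition span_from (a : nat) : 'M[F]_n :=
  (\sum_(j < n | (a <= j.+1)%N) <<ev j.+1>>)%MS.

Definition lie_automorphism br f :=
  [/\ is_linear_map f, bijective f & forall x y, f (br x y) = br (f x) (f y)].

Definition local_automorphism br f :=
  is_linear_map f /\
  forall x, exists phi, lie_automorphism br phi /\ phi x = f x.

Definition Delta3 (x : 'rV[F]_n) : 'rV[F]_n := x + coordk x 3 *: ev n.

End Lie.

(* Delta = id + D0 with D0 x = x_3 e_n. It fixes e_1 and e_2 but sends
   [e_1, e_2] = e_3 to e_3 + e_n, so it is not an automorphism. Locally it agrees
   with automorphisms id + D, where D is a derivation with [D x, D y] = 0: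
   for x_2 <> 0 take D y = (x_3 / x_2) y_2 e_n (e_n is central and y_2 vanishes
   on [L, L]); for x_2 = 0 take D y = y_2 e_(n-1) + y_3 e_n, a derivation since
   [x, e_(n-1)] = (x_1 + alpha x_2) e_n and the e_3-coordinate of [x, y] is
   x_1 y_2 - x_2 y_1. Both bracket computations follow from
   L^k = span (e_(k+2), ..., e_n) and [L^i, L^j] <= L^(i+j+1). *)

From HB Require Import structures.
From mathcomp Require Import all_boot all_order all_algebra.
From mathcomp Require Import ring zify.
Import Order.TTheory GRing.Theory Num.Theory.
Local Open Scope ring_scope.
Set Implicit Arguments. Unset Strict Implicit.

Section Coordinates.
Variables (F : fieldType) (n : nat).
Implicit Types (x y v : 'rV[F]_n).
Local Notation e := (@ev F n).

Lemma coordkE x (j : 'I_n) : coordk x j.+1 = x 0 j.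
Proof. by rewrite /coordk (big_pred1 j) // => i /=; rewrite eqSS. Qed.

Lemma coordk0 k : coordk (0 : 'rV[F]_n) k = 0.
Proof. by rewrite /coordk big1 // => j _; rewrite mxE. Qed.

Lemma coordkD x y k : coordk (x + y) k = coordk x k + coordk y k.
Proof. by rewrite /coordk -big_split; apply: eq_bigr => j _; rewrite mxE. Qed.

Lemma coordkZ a x k : coordk (a *: x) k = a * coordk x k.
Proof. by rewrite /coordk mulr_sumr; apply: eq_bigr => j _; rewrite mxE. Qed.

Lemma coordkN x k : coordk (- x) k = - coordk x k.
Proof. by rewrite -scaleN1r coordkZ mulN1r. Qed.

Lemma coordk_at0 x : coordk x 0 = 0.
Proof. by rewrite /coordk big_pred0. Qed.

Lemma delta_mx_ev (j : 'I_n) : 'e_j = e j.+1.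
Proof. by apply/rowP => k; rewrite !mxE /= eqSS. Qed.

Lemma coordk_ev i k : (0 < k <= n)%N -> coordk (e i) k = (i == k)%:R.
Proof.
case: k => // k /andP[_ lt_kn].
by have := coordkE (e i) (Ordinal lt_kn); rewrite mxE eq_sym.
Qed.

Lemma coordk_ev_neq i k : i != k -> coordk (e i) k = 0.
Proof.
move=> neq_ik; rewrite /coordk big1 // => j /eqP ejk.
by rewrite mxE ejk eq_sym (negbTE neq_ik).
Qed.

Lemma span_fromP a v :
  (v <= span_from F n a)%MS <-> forall k, (k < a)%N -> coordk v k = 0.
Proof.
split=> [/sub_sumsmxP [u ->] k lt_ka | v_low].
  rewrite (big_morph (fun w : 'rV[F]_n => coordk w k) (fun x y => coordkD x y k)
    (coordk0 k)) big1 // => j le_aj.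
  have : (u j *m <<e j.+1>> <= <<e j.+1>>)%MS by apply: submxMl.
  rewrite genmxE => /sub_rVP [b ->].
  by rewrite coordkZ coordk_ev_neq ?mulr0 //; apply/eqP; lia.
rewrite [v]row_sum_delta; apply: summx_sub => j _.
have [le_aj | lt_ja] := leqP a j.+1.
  by apply/scalemx_sub/(sumsmx_sup j) => //; rewrite genmxE delta_mx_ev.
by rewrite -coordkE v_low // scale0r sub0mx.
Qed.

Lemma ev_span_from a i : (a <= i)%N -> (e i <= span_from F n a)%MS.
Proof.
move=> le_ai; apply/span_fromP => k lt_ka.
by rewrite coordk_ev_neq //; apply/eqP; lia.
Qed.

Lemma span_from_last v : (v <= span_from F n n)%MS -> v = coordk v n *: e n.
Proof.
move=> v_top; apply/rowP => j; rewrite !mxE.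
have [jn | ne_jn] := eqVneq j.+1 n.
  by rewrite mulr1; have := coordkE v j; rewrite jn => ->.
rewrite mulr0 -coordkE.
by move/span_fromP: v_top; apply; have := ltn_ord j; lia.
Qed.

End Coordinates.

Section LinearMap.
Variables (F : fieldType) (n : nat) (f : 'rV[F]_n -> 'rV[F]_n).
Hypothesis f_lin : is_linear_map f.

Lemma linear_map0 : f 0 = 0.
Proof.
have := f_lin 1 0 0; rewrite !scale1r addr0 => /esym/eqP.
by rewrite -subr_eq0 addrK => /eqP.
Qed.

Lemma linear_mapD x y : f (x + y) = f x + f y.
Proof. by have := f_lin 1 x y; rewrite !scale1r. Qed.

Lemma linear_mapZ a x : f (a *: x) = a *: f x.
Proof. by have := f_lin a x 0; rewrite !addr0 linear_map0 addr0. Qed.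

Lemma linear_map_sum I (r : seq I) (P : pred I) (g : I -> 'rV[F]_n) :
  f (\sum_(i <- r | P i) g i) = \sum_(i <- r | P i) f (g i).
Proof. exact: (big_morph f linear_mapD linear_map0). Qed.

Lemma linear_injective_bijective : (forall y, f y = 0 -> y = 0) -> bijective f.
Proof.
move=> f_inj; pose M := \matrix_(i < n, j < n) f 'e_i 0 j.
have fM y : f y = y *m M.
  rewrite mulmx_sum_row {1}[y]row_sum_delta linear_map_sum.
  apply: eq_bigr => i _; rewrite linear_mapZ; congr (_ *: _).
  by apply/rowP => j; rewrite !mxE.
have M_unit : M \in unitmx.
  rewrite -row_free_unit -kermx_eq0; apply/rowV0P => y /sub_kermxP yM0.
  by apply: f_inj; rewrite fM.
by exists (mulmx^~ (invmx M)) => y; rewrite fM ?mulmxK ?mulmxKV.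
Qed.

End LinearMap.

Section SubspaceInduction.
Variables (F : fieldType) (n : nat) (P : 'rV[F]_n -> Prop).
Hypotheses (P0 : P 0) (P_lin : forall a x y, P x -> P y -> P (a *: x + y)).

Lemma sumsmx_ind (I : finType) (PI : pred I) (B : I -> 'M[F]_n) :
  (forall i w, PI i -> (w <= B i)%MS -> P w) ->
  forall v, (v <= \sum_(i | PI i) B i)%MS -> P v.
Proof.
move=> PB v /sub_sumsmxP [u ->]; apply: big_ind => //.
  by move=> x y Px Py; have := P_lin 1 Px Py; rewrite scale1r.
by move=> i PIi; apply: (PB i) => //; apply: submxMl.
Qed.

Lemma genmx_ind g : P g -> forall w, (w <= <<g>>)%MS -> P w.
Proof.
move=> Pg w; rewrite genmxE => /sub_rVP [a ->].
by have := P_lin a Pg P0; rewrite addr0.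
Qed.

End SubspaceInduction.

Definition is_derivation (F : fieldType) n
    (br : 'rV[F]_n -> 'rV[F]_n -> 'rV[F]_n) (D : 'rV[F]_n -> 'rV[F]_n) :=
  forall x y, D (br x y) = br (D x) y + br x (D y).

Section LieBracket.
Variables (F : fieldType) (n : nat) (br : 'rV[F]_n -> 'rV[F]_n -> 'rV[F]_n).
Hypothesis br_lie : is_lie_bracket br.
Implicit Types (x y z u v : 'rV[F]_n).

Lemma br_linear_l z : is_linear_map (br^~ z).
Proof. by case: br_lie => lin_l _ _ _ a x y; apply: lin_l. Qed.

Lemma br_linear_r z : is_linear_map (br z).
Proof. by case: br_lie => _ lin_r _ _ a x y; apply: lin_r. Qed.

Lemma br0r z : br z 0 = 0.
Proof. exact: (linear_map0 (br_linear_r z)). Qed.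

Lemma brDl x y z : br (x + y) z = br x z + br y z.
Proof. exact: (linear_mapD (br_linear_l z)). Qed.

Lemma brDr x y z : br z (x + y) = br z x + br z y.
Proof. exact: (linear_mapD (br_linear_r z)). Qed.

Lemma brZl a x z : br (a *: x) z = a *: br x z.
Proof. exact: (linear_mapZ (br_linear_l z)). Qed.

Lemma brZr a x z : br z (a *: x) = a *: br z x.
Proof. exact: (linear_mapZ (br_linear_r z)). Qed.

Lemma brxx x : br x x = 0.
Proof. by case: br_lie. Qed.

Lemma br_anti x y : br x y = - br y x.
Proof.
have := brxx (x + y); rewrite brDl !brDr !brxx add0r addr0.
by move/eqP; rewrite addr_eq0 => /eqP.
Qed.

Lemma br_suml I (r : seq I) (P : pred I) (f : I -> 'rV[F]_n) z :
  br (\sum_(i <- r | P i) f i) z = \sum_(i <- r | P i) br (f i) z.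
Proof. exact: (linear_map_sum (br_linear_l z)). Qed.

Lemma br_sumr I (r : seq I) (P : pred I) (f : I -> 'rV[F]_n) z :
  br z (\sum_(i <- r | P i) f i) = \sum_(i <- r | P i) br z (f i).
Proof. exact: (linear_map_sum (br_linear_r z)). Qed.

Lemma aut_add_derivation D :
  is_linear_map D -> is_derivation br D -> (forall x y, br (D x) (D y) = 0) ->
  (forall y, y + D y = 0 -> y = 0) -> lie_automorphism br (fun y => y + D y).
Proof.
move=> D_lin D_der DD0 D_inj.
have lin : is_linear_map (fun y => y + D y).
  by move=> a x y; rewrite D_lin scalerDr addrACA.
split => //; first exact: linear_injective_bijective.
move=> x y; rewrite D_der brDl !brDr DD0 addr0.
by rewrite addrA (addrAC (br x y)).
Qed.

Lemma lcs_step k u y : (u <= lcs br k)%MS -> (br u y <= lcs br k.+1)%MS.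
Proof.
case/submxP => C ->; rewrite mulmx_sum_row [y]row_sum_delta br_suml.
apply: summx_sub => i _; rewrite brZl; apply: scalemx_sub.
rewrite br_sumr; apply: summx_sub => j _; rewrite brZr; apply: scalemx_sub.
apply: (sumsmx_sup i) => //; apply: (sumsmx_sup j) => //.
by rewrite genmxE delta_mx_ev.
Qed.

Lemma lcs_step_r k u y : (u <= lcs br k)%MS -> (br y u <= lcs br k.+1)%MS.
Proof. by move=> u_k; rewrite br_anti eqmx_opp; apply: lcs_step. Qed.

Lemma lcs_ind k (P : 'rV[F]_n -> Prop) :
  P 0 -> (forall a x y, P x -> P y -> P (a *: x + y)) ->
  (forall i (j : 'I_n), P (br (row i (lcs br k)) (ev F n j.+1))) ->
  forall v, (v <= lcs br k.+1)%MS -> P v.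
Proof.
move=> P0 P_lin Pgen; apply: sumsmx_ind => // i w _.
by apply: sumsmx_ind => // j {}w _; apply: genmx_ind.
Qed.

(* Induction on [j]: a generator of L^(j+1) is [r, e] with r in L^j, and the
   Jacobi identity rewrites [u, [r, e]] as brackets covered by the induction. *)
Lemma lcs_bracket i j u v : (u <= lcs br i)%MS -> (v <= lcs br j)%MS ->
  (br u v <= lcs br (i + j).+1)%MS.
Proof.
elim: j i u v => [|j IHj] i u v u_i; first by rewrite addn0 => _; apply: lcs_step.
move=> v_j; move: v v_j i u u_i.
apply: (lcs_ind (P := fun v => forall i u, (u <= lcs br i)%MS ->
  (br u v <= lcs br (i + j.+1).+1)%MS)).
- by move=> i u _; rewrite br0r sub0mx.
- move=> a x y Px Py i u u_i; rewrite brDr brZr.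
  by apply: addmx_sub; [apply: scalemx_sub; apply: Px | apply: Py].
move=> r_idx l i u u_i.
set r := row r_idx (lcs br j); set w := ev F n l.+1.
have r_j : (r <= lcs br j)%MS by apply: row_sub.
case: br_lie => _ _ _ jacobi.
have /eqP := jacobi u r w; rewrite -addrA addr_eq0 => /eqP ->.
rewrite eqmx_opp; apply: addmx_sub.
  by rewrite br_anti eqmx_opp -addSnnS; exact: IHj (lcs_step_r w u_i) r_j.
by rewrite addnS; exact: lcs_step_r w (IHj _ _ _ u_i r_j).
Qed.

End LieBracket.

Lemma add_mul_nat_bool_eq0 (F : numFieldType) (a : F) (b : bool) :
  a + a * b%:R = 0 -> a = 0.
Proof.
rewrite -{1}[a]mulr1 -mulrDr => /eqP; rewrite mulf_eq0 => /orP[/eqP // |].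
by case: b; rewrite ?addr0 ?oner_eq0 // gt_eqF // addr_gt0 ?ltr01.
Qed.

Section FiliformModel.
Variables (F : numFieldType) (n : nat) (br : 'rV[F]_n -> 'rV[F]_n -> 'rV[F]_n).
Hypotheses (n_ge3 : (3 <= n)%N) (br_lie : is_lie_bracket br) (br_fil : filiform br).
Hypothesis br_e1 :
  forall i, (2 <= i <= n.-1)%N -> br (ev F n 1) (ev F n i) = ev F n i.+1.
Hypothesis lcs_span :
  forall k, (1 <= k <= n - 2)%N -> (lcs br k == span_from F n k.+2)%MS.
Implicit Types (x y v : 'rV[F]_n).
Local Notation e := (ev F n).

Lemma lcs_last : lcs br n.-1 = 0.
Proof.
case: br_fil => _ rank_lcs; apply/eqP; rewrite -mxrank_eq0 rank_lcs; lia.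
Qed.

Lemma lcs_sub_span k : (1 <= k <= n.-1)%N -> (lcs br k <= span_from F n k.+2)%MS.
Proof.
move=> k_range; have [lt_k|ge_k] := ltnP k n.-1.
  have k_low : (1 <= k <= n - 2)%N by lia.
  by case/andP: (lcs_span k_low).
have -> : k = n.-1 by lia.
by rewrite lcs_last sub0mx.
Qed.

Lemma ev_lcs i : (2 <= i <= n)%N -> (e i <= lcs br (i - 2))%MS.
Proof.
case: i => [|[|[|k]]] // i_range; first exact: submx1.
have k_low : (1 <= k.+1 <= n - 2)%N by lia.
case/andP: (lcs_span k_low) => _; apply: submx_trans.
exact: ev_span_from.
Qed.

Lemma br_en_l x : br (e n) x = 0.
Proof.
apply/eqP; rewrite -submx0 -lcs_last (_ : n.-1 = (n - 2).+1); last by lia.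
by apply/(lcs_step br_lie)/ev_lcs; lia.
Qed.

Lemma br_en_r x : br x (e n) = 0.
Proof. by rewrite (br_anti br_lie) br_en_l oppr0. Qed.

Lemma coordk_e123 i k : (0 < k <= 3)%N -> coordk (e i) k = (i == k)%:R.
Proof. by move=> k_range; apply: coordk_ev; lia. Qed.

Lemma coordk_br_low x y k : (k < 3)%N -> coordk (br x y) k = 0.
Proof.
move=> lt_k3.
have br_1 : (br x y <= lcs br 1)%MS by apply: (lcs_step br_lie); exact: submx1.
have lcs1_span : (lcs br 1 <= span_from F n 3)%MS by apply: lcs_sub_span; lia.
by move/span_fromP: (submx_trans br_1 lcs1_span); apply.
Qed.

Lemma decomp_lcs1 x :
  exists2 r, (r <= lcs br 1)%MS & x = coordk x 1 *: e 1 + coordk x 2 *: e 2 + r.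
Proof.
exists (x - coordk x 1 *: e 1 - coordk x 2 *: e 2); last first.
  by apply/rowP => j; rewrite !mxE; ring.
have one_low : (1 <= 1 <= n - 2)%N by lia.
case/andP: (lcs_span one_low) => _; apply: submx_trans.
apply/span_fromP => -[|[|[|k]]] // _;
  rewrite ?coordk_at0 // !coordkD !coordkN !coordkZ !coordk_e123 //=; ring.
Qed.

Lemma br_e12 : br (e 1) (e 2) = e 3.
Proof. by apply: br_e1; lia. Qed.

Lemma coordk3_br x y :
  coordk (br x y) 3 = coordk x 1 * coordk y 2 - coordk x 2 * coordk y 1.
Proof.
have [r r_1 x_eq] := decomp_lcs1 x; have [s s_1 y_eq] := decomp_lcs1 y.
rewrite {1}x_eq {1}y_eq.
have lcs2_3 v : (v <= lcs br 2)%MS -> coordk v 3 = 0.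
  have lcs2_span : (lcs br 2 <= span_from F n 4)%MS by apply: lcs_sub_span; lia.
  by move=> v_2; move/span_fromP: (submx_trans v_2 lcs2_span); apply.
have r_out v : coordk (br r v) 3 = 0 by apply/lcs2_3/(lcs_step br_lie).
have s_out v : coordk (br v s) 3 = 0 by apply/lcs2_3/(lcs_step_r br_lie).
rewrite !(brDl br_lie) !(brDr br_lie) !(brZl br_lie) !(brZr br_lie) !(brxx br_lie).
rewrite [br (e 2) (e 1)](br_anti br_lie) br_e12.
rewrite !coordkD !coordkZ !coordkN !r_out !s_out coordk0 coordk_e123 //=; ring.
Qed.

Let alpha := coordk (br (e 2) (e n.-1)) n.

Lemma br_e_pred x : br x (e n.-1) = (coordk x 1 + coordk x 2 * alpha) *: e n.
Proof.
have [r r_1 x_eq] := decomp_lcs1 x; rewrite {1}x_eq.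
have pred_lcs : (e n.-1 <= lcs br (n - 3))%MS.
  by rewrite (_ : (n - 3)%N = (n.-1 - 2)%N); [apply: ev_lcs | ]; lia.
have r_out : br r (e n.-1) = 0.
  apply/eqP; rewrite -submx0 -lcs_last [X in lcs br X](_ : _ = (1 + (n - 3)).+1)%N.
    exact: (lcs_bracket br_lie r_1 pred_lcs).
  lia.
have e1_pred : br (e 1) (e n.-1) = e n.
  by rewrite br_e1 ?prednK //; lia.
have e2_pred : br (e 2) (e n.-1) = alpha *: e n.
  have e2_lcs : (br (e 2) (e n.-1) <= lcs br (n - 3).+1)%MS.
    exact: (lcs_step_r br_lie _ pred_lcs).
  have lcs_span_top : (lcs br (n - 3).+1 <= span_from F n n)%MS.
    have := @lcs_sub_span (n - 3).+1; rewrite [X in span_from _ _ X](_ : _ = n).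
      by apply; lia.
    lia.
  exact/span_from_last/(submx_trans e2_lcs).
rewrite !(brDl br_lie) !(brZl br_lie) r_out e1_pred e2_pred addr0.
by rewrite scalerA -scalerDl mulrC.
Qed.

Definition der_coord2 (c : F) y := (c * coordk y 2) *: e n.
Definition der_coord23 y := coordk y 2 *: e n.-1 + coordk y 3 *: e n.

Lemma der_coord2_aut c : lie_automorphism br (fun y => y + der_coord2 c y).
Proof.
rewrite /der_coord2; apply: aut_add_derivation => //.
- by move=> a x y; rewrite coordkD coordkZ; apply/rowP => j; rewrite !mxE; ring.
- move=> x y; rewrite coordk_br_low // mulr0 scale0r.
  by rewrite (brZl br_lie) (brZr br_lie) br_en_l br_en_r !scaler0 addr0.
- by move=> x y; rewrite (brZl br_lie) br_en_l scaler0.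
move=> y /[dup] y0 /(congr1 (fun v => coordk v 2)).
rewrite coordk0 coordkD coordkZ coordk_ev_neq; last by apply/eqP; lia.
by rewrite mulr0 addr0 => y2; move: y0; rewrite y2 mulr0 scale0r addr0.
Qed.

Lemma der_coord23_aut : lie_automorphism br (fun y => y + der_coord23 y).
Proof.
rewrite /der_coord23; apply: aut_add_derivation => //.
- move=> a x y; rewrite !coordkD !coordkZ; apply/rowP => j; rewrite !mxE; ring.
- move=> x y; rewrite coordk3_br coordk_br_low // scale0r add0r.
  rewrite !(brDl br_lie) !(brDr br_lie) !(brZl br_lie) !(brZr br_lie).
  rewrite br_en_l br_en_r [br (e n.-1) y](br_anti br_lie) !br_e_pred.
  by apply/rowP => j; rewrite !mxE; ring.
- move=> x y; rewrite !(brDl br_lie) !(brDr br_lie) !(brZl br_lie) !(brZr br_lie).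
  by rewrite (brxx br_lie) !br_en_l br_en_r !scaler0 !addr0.
(* For n = 3 or 4, e_(n-1) or e_n is e_2 or e_3: its coordinates are booleans. *)
move=> y /[dup] y0 /[dup] /(congr1 (fun v => coordk v 2)) +
  /(congr1 (fun v => coordk v 3)).
rewrite !coordk0 !coordkD !coordkZ !coordk_e123 // (_ : (n == 2) = false); last by lia.
rewrite mulr0n mulr0 addr0 => /add_mul_nat_bool_eq0 y2.
rewrite y2 mul0r add0r => /add_mul_nat_bool_eq0 y3.
by move: y0; rewrite y2 y3 !scale0r !addr0.
Qed.

Lemma Delta3_local_aut : local_automorphism br (@Delta3 F n).
Proof.
split=> [a x y | x].
  by rewrite /Delta3 coordkD coordkZ; apply/rowP => j; rewrite !mxE; ring.
have [x2_0 | x2_neq0] := eqVneq (coordk x 2) 0.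
  exists (fun y => y + der_coord23 y); split; first exact: der_coord23_aut.
  by rewrite /der_coord23 /Delta3 x2_0 scale0r add0r.
exists (fun y => y + der_coord2 (coordk x 3 / coordk x 2) y).
by split; [exact: der_coord2_aut | rewrite /der_coord2 /Delta3 divfK].
Qed.

Lemma Delta3_not_aut : ~ lie_automorphism br (@Delta3 F n).
Proof.
case=> _ _ /(_ (e 1) (e 2)); rewrite /Delta3 br_e12 !coordk_e123 //= !scale0r !addr0.
rewrite br_e12 scale1r => /eqP; rewrite -subr_eq0 addrC addKr => /eqP.
move=> /(congr1 (fun v => coordk v n)); rewrite coordk0 coordk_ev ?eqxx; last by lia.
by move/eqP; rewrite oner_eq0.
Qed.

End FiliformModel.

Theorem lemma4p3 (F : numClosedFieldType) (n : nat)
  (br : 'rV[F]_n -> 'rV[F]_n -> 'rV[F]_n) :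
  (3 <= n)%N ->
  is_lie_bracket br ->
  filiform br ->
  (forall i, (2 <= i <= n.-1)%N -> br (@ev F n 1) (@ev F n i) = @ev F n i.+1) ->
  (forall k, (1 <= k <= n - 2)%N -> (lcs br k == @span_from F n k.+2)%MS) ->
  local_automorphism br (@Delta3 F n) /\ ~ lie_automorphism br (@Delta3 F n).
Proof.
move=> n_ge3 br_lie br_fil br_e1 lcs_span.
by split; [exact: Delta3_local_aut | exact: Delta3_not_aut].
Qed.
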